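(* There exist a Banach algebra $A$ which is not nil and a Banach $A$-bimodule $X$ such that $JMul_{2}(A,X)\subsetneq JMul_{3}(A,X)$.
   Context: A Banach algebra $A$ is nil if there is $n\in\mathbb{N}$ with $a^n=0$ for all $a\in A$. A bounded linear map $J:A\to X$ is an $n$-Jordan multiplier if $J(a^n)=a\cdot J(a^{n-1})=J(a^{n-1})\cdot a$ for all $a\in A$; $JMul_n(A,X)$ is the set of these. *)

From Stdlib Require Import Reals.
Open Scope R_scope.

Record C := mkC { Re : R; Im : R }.
Definition C0 : C := mkC 0 0.
Definition C1 : C := mkC 1 0.
Definition Cadd (z w : C) : C := mkC (Re z + Re w) (Im z + Im w).
Definition Cmul (z w : C) : C :=
  mkC (Re z * Re w - Im z * Im w) (Re z * Im w + Im z * Re w).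
Definition Cmod (z : C) : R := sqrt (Re z * Re z + Im z * Im z).

Record BanachSpace := {
  bs_car :> Type;
  bs_add : bs_car -> bs_car -> bs_car;
  bs_zero : bs_car;
  bs_opp : bs_car -> bs_car;
  bs_scal : C -> bs_car -> bs_car;
  bs_norm : bs_car -> R;
  bs_addA : forall x y z, bs_add x (bs_add y z) = bs_add (bs_add x y) z;
  bs_addC : forall x y, bs_add x y = bs_add y x;
  bs_add0 : forall x, bs_add x bs_zero = x;
  bs_addN : forall x, bs_add x (bs_opp x) = bs_zero;
  bs_scal1 : forall x, bs_scal C1 x = x;
  bs_scalA : forall l m x, bs_scal l (bs_scal m x) = bs_scal (Cmul l m) x;
  bs_scalDr : forall l x y, bs_scal l (bs_add x y) = bs_add (bs_scal l x) (bs_scal l y);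
  bs_scalDl : forall l m x, bs_scal (Cadd l m) x = bs_add (bs_scal l x) (bs_scal m x);
  bs_norm_ge0 : forall x, 0 <= bs_norm x;
  bs_norm_eq0 : forall x, bs_norm x = 0 -> x = bs_zero;
  bs_normZ : forall l x, bs_norm (bs_scal l x) = Cmod l * bs_norm x;
  bs_normD : forall x y, bs_norm (bs_add x y) <= bs_norm x + bs_norm y;
  bs_complete : forall u : nat -> bs_car,
    (forall eps, 0 < eps -> exists N, forall m n, (N <= m)%nat -> (N <= n)%nat ->
        bs_norm (bs_add (u m) (bs_opp (u n))) < eps) ->
    exists l, forall eps, 0 < eps -> exists N, forall n, (N <= n)%nat ->
        bs_norm (bs_add (u n) (bs_opp l)) < eps
}.

Arguments bs_add {_}. Arguments bs_zero {_}. Arguments bs_opp {_}.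
Arguments bs_scal {_}. Arguments bs_norm {_}.

Record BanachAlgebra := {
  ba_sp :> BanachSpace;
  ba_mul : ba_sp -> ba_sp -> ba_sp;
  ba_mulA : forall a b c, ba_mul a (ba_mul b c) = ba_mul (ba_mul a b) c;
  ba_mulDl : forall a b c, ba_mul (bs_add a b) c = bs_add (ba_mul a c) (ba_mul b c);
  ba_mulDr : forall a b c, ba_mul a (bs_add b c) = bs_add (ba_mul a b) (ba_mul a c);
  ba_mulZl : forall l a b, ba_mul (bs_scal l a) b = bs_scal l (ba_mul a b);
  ba_mulZr : forall l a b, ba_mul a (bs_scal l b) = bs_scal l (ba_mul a b);
  ba_normM : forall a b, bs_norm (ba_mul a b) <= bs_norm a * bs_norm b
}.

Arguments ba_mul {_}.

(* power a^n for n >= 1 : apow a 1 = a, apow a (n+1) = a * a^n.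
   (apow a 0 is set to a; it is never used with n = 0 below.) *)
Fixpoint apow {A : BanachAlgebra} (a : A) (n : nat) : A :=
  match n with
  | O => a
  | S O => a
  | S k => ba_mul a (apow a k)
  end.

Definition is_nil (A : BanachAlgebra) : Prop :=
  exists n : nat, (1 <= n)%nat /\ forall a : A, apow a n = bs_zero.

Record BanachBimodule (A : BanachAlgebra) := {
  bm_sp :> BanachSpace;
  bm_lact : A -> bm_sp -> bm_sp;
  bm_ract : bm_sp -> A -> bm_sp;
  bm_lDl : forall a b x, bm_lact (bs_add a b) x = bs_add (bm_lact a x) (bm_lact b x);
  bm_lDr : forall a x y, bm_lact a (bs_add x y) = bs_add (bm_lact a x) (bm_lact a y);
  bm_lZl : forall l a x, bm_lact (bs_scal l a) x = bs_scal l (bm_lact a x);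
  bm_lZr : forall l a x, bm_lact a (bs_scal l x) = bs_scal l (bm_lact a x);
  bm_rDl : forall x y a, bm_ract (bs_add x y) a = bs_add (bm_ract x a) (bm_ract y a);
  bm_rDr : forall x a b, bm_ract x (bs_add a b) = bs_add (bm_ract x a) (bm_ract x b);
  bm_rZl : forall l x a, bm_ract (bs_scal l x) a = bs_scal l (bm_ract x a);
  bm_rZr : forall l x a, bm_ract x (bs_scal l a) = bs_scal l (bm_ract x a);
  bm_lA : forall a b x, bm_lact (ba_mul a b) x = bm_lact a (bm_lact b x);
  bm_rA : forall x a b, bm_ract x (ba_mul a b) = bm_ract (bm_ract x a) b;
  bm_lrA : forall a x b, bm_ract (bm_lact a x) b = bm_lact a (bm_ract x b);
  bm_lbound : exists M, forall a x, bs_norm (bm_lact a x) <= M * bs_norm a * bs_norm x;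
  bm_rbound : exists M, forall x a, bs_norm (bm_ract x a) <= M * bs_norm x * bs_norm a
}.

Arguments bm_lact {_ _}. Arguments bm_ract {_ _}.

Definition bounded_linear {E F : BanachSpace} (J : E -> F) : Prop :=
  (forall x y, J (bs_add x y) = bs_add (J x) (J y)) /\
  (forall l x, J (bs_scal l x) = bs_scal l (J x)) /\
  (exists M, forall x, bs_norm (J x) <= M * bs_norm x).

(* J : A -> X is an n-Jordan multiplier:
   J(a^n) = a . J(a^{n-1}) = J(a^{n-1}) . a  for all a in A.
   Used for n >= 2, so a^{n-1} is a genuine positive power. *)
Definition is_JMul (n : nat) {A : BanachAlgebra} {X : BanachBimodule A}
    (J : A -> X) : Prop :=
  bounded_linear J /\
  forall a : A,
    J (apow a n) = bm_lact a (J (apow a (n - 1))) /\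
    bm_lact a (J (apow a (n - 1))) = bm_ract (J (apow a (n - 1))) a.

(* Take A = C ⊕ N, where N = span{u, u^2} with u^3 = 0, acting trivially on X = C.
   Then every n-Jordan multiplier is just a bounded linear J with J(a^n) = 0.
   A is not nil because (1, 0) is a nonzero idempotent.  For a = (x, n) we have
   a^3 = x^3 (1, 0)^2, so J(a^2) = 0 for all a forces J(a^3) = 0; on the other hand
   the coordinate of u^2 kills every cube but not u^2 itself. *)

From Pilot Require Import Defs.
From Stdlib Require Import Reals Lra Lia.
From Coquelicot Require Complex.
Open Scope R_scope.

Definition Copp (z : Defs.C) : Defs.C := mkC (- Re z) (- Im z).

Definition toC (z : Defs.C) : Complex.C := (Re z, Im z).

Lemma C_ext (z w : Defs.C) : Re z = Re w -> Im z = Im w -> z = w.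
Proof. destruct z, w; simpl; intros -> ->; reflexivity. Qed.

Lemma Cmod_toC (z : Defs.C) : Cmod z = Complex.Cmod (toC z).
Proof. unfold Cmod, Complex.Cmod; simpl; f_equal; ring. Qed.

Lemma Cmod_ge0 (z : Defs.C) : 0 <= Cmod z.
Proof. apply sqrt_pos. Qed.

Lemma Cmod_C0 : Cmod C0 = 0.
Proof. unfold Cmod; simpl; rewrite Rmult_0_l, Rplus_0_l; apply sqrt_0. Qed.

Lemma Cmod_eq0 (z : Defs.C) : Cmod z = 0 -> z = C0.
Proof.
  rewrite Cmod_toC; intros Hz; apply Complex.Cmod_eq_0 in Hz.
  injection Hz; intros; apply C_ext; assumption.
Qed.

Lemma Cmod_mul (z w : Defs.C) : Cmod (Cmul z w) = Cmod z * Cmod w.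
Proof.
  rewrite !Cmod_toC, <- Complex.Cmod_mult.
  f_equal; unfold toC, Complex.Cmult; simpl; f_equal; ring.
Qed.

Lemma Cmod_add_le (z w : Defs.C) : Cmod (Cadd z w) <= Cmod z + Cmod w.
Proof. rewrite !Cmod_toC; exact (Complex.Cmod_triangle (toC z) (toC w)). Qed.

Lemma Cmod_le_parts (z : Defs.C) : Cmod z <= 2 * Rmax (Rabs (Re z)) (Rabs (Im z)).
Proof.
  rewrite Cmod_toC; eapply Rle_trans; [apply Complex.Cmod_2Rmax|].
  apply Rmult_le_compat_r.
  - eapply Rle_trans; [apply Rabs_pos | apply Rmax_l].
  - rewrite <- (sqrt_square 2) at 2 by lra; apply sqrt_le_1_alt; lra.
Qed.

Lemma Rabs_Re_le (z : Defs.C) : Rabs (Re z) <= Cmod z.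
Proof. rewrite Cmod_toC; eapply Rle_trans; [apply Rmax_l | exact (Complex.Rmax_Cmod (toC z))]. Qed.

Lemma Rabs_Im_le (z : Defs.C) : Rabs (Im z) <= Cmod z.
Proof. rewrite Cmod_toC; eapply Rle_trans; [apply Rmax_r | exact (Complex.Rmax_Cmod (toC z))]. Qed.

Lemma C_complete (u : nat -> Defs.C) :
  (forall eps, 0 < eps -> exists N, forall m n, (N <= m)%nat -> (N <= n)%nat ->
      Cmod (Cadd (u m) (Copp (u n))) < eps) ->
  exists l, forall eps, 0 < eps -> exists N, forall n, (N <= n)%nat ->
      Cmod (Cadd (u n) (Copp l)) < eps.
Proof.
  intros Hu.
  assert (Hre : Cauchy_crit (fun n => Re (u n))).
  { intros eps He; destruct (Hu eps He) as [N HN]; exists N; intros m n Hm Hn.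
    eapply Rle_lt_trans; [|apply (HN m n Hm Hn)]; exact (Rabs_Re_le (Cadd (u m) (Copp (u n)))). }
  assert (Him : Cauchy_crit (fun n => Im (u n))).
  { intros eps He; destruct (Hu eps He) as [N HN]; exists N; intros m n Hm Hn.
    eapply Rle_lt_trans; [|apply (HN m n Hm Hn)]; exact (Rabs_Im_le (Cadd (u m) (Copp (u n)))). }
  destruct (R_complete _ Hre) as [lre Hlre], (R_complete _ Him) as [lim Hlim].
  exists (mkC lre lim); intros eps He.
  destruct (Hlre (eps / 2)) as [N1 H1]; [lra|].
  destruct (Hlim (eps / 2)) as [N2 H2]; [lra|].
  exists (Nat.max N1 N2); intros n Hn.
  eapply Rle_lt_trans; [apply Cmod_le_parts|].
  assert (Hmax : Rmax (Rabs (Re (u n) - lre)) (Rabs (Im (u n) - lim)) < eps / 2).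
  { apply Rmax_lub_lt; [apply H1 | apply H2]; lia. }
  simpl; unfold Rminus in Hmax; lra.
Qed.

Definition C_BanachSpace : BanachSpace.
Proof.
  refine {| bs_car := Defs.C; bs_add := Cadd; bs_zero := C0; bs_opp := Copp;
            bs_scal := Cmul; bs_norm := Cmod |}.
  all: try (intros; apply C_ext; simpl; ring).
  - exact Cmod_ge0.
  - exact Cmod_eq0.
  - exact Cmod_mul.
  - exact Cmod_add_le.
  - exact C_complete.
Defined.

Section BanachSpaceFacts.
Variable E : BanachSpace.

Lemma bs_add_idem_eq0 (x : E) : bs_add x x = x -> x = bs_zero.
Proof.
  intros Hx.
  transitivity (bs_add (bs_add x x) (bs_opp x)).
  - now rewrite <- bs_addA, bs_addN, bs_add0.
  - now rewrite Hx, bs_addN.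
Qed.

Lemma bs_scal0 (l : Defs.C) : bs_scal l (@bs_zero E) = bs_zero.
Proof.
  apply bs_add_idem_eq0; rewrite <- bs_scalDr; f_equal; apply bs_add0.
Qed.

Lemma bs_norm0 : bs_norm (@bs_zero E) = 0.
Proof. rewrite <- (bs_scal0 C0), bs_normZ, Cmod_C0; ring. Qed.

End BanachSpaceFacts.

Section Product.
Variables E F : BanachSpace.

Definition prod_add (x y : E * F) : E * F :=
  (bs_add (fst x) (fst y), bs_add (snd x) (snd y)).
Definition prod_opp (x : E * F) : E * F := (bs_opp (fst x), bs_opp (snd x)).
Definition prod_scal (l : Defs.C) (x : E * F) : E * F := (bs_scal l (fst x), bs_scal l (snd x)).
Definition prod_norm (x : E * F) : R := bs_norm (fst x) + bs_norm (snd x).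

Lemma prod_complete (u : nat -> E * F) :
  (forall eps, 0 < eps -> exists N, forall m n, (N <= m)%nat -> (N <= n)%nat ->
      prod_norm (prod_add (u m) (prod_opp (u n))) < eps) ->
  exists l, forall eps, 0 < eps -> exists N, forall n, (N <= n)%nat ->
      prod_norm (prod_add (u n) (prod_opp l)) < eps.
Proof.
  unfold prod_norm, prod_add, prod_opp; simpl; intros Hu.
  destruct (bs_complete E (fun n => fst (u n))) as [l1 Hl1].
  { intros eps He; destruct (Hu eps He) as [N HN]; exists N; intros m n Hm Hn.
    specialize (HN m n Hm Hn); pose proof (bs_norm_ge0 F (bs_add (snd (u m)) (bs_opp (snd (u n))))); lra. }
  destruct (bs_complete F (fun n => snd (u n))) as [l2 Hl2].
  { intros eps He; destruct (Hu eps He) as [N HN]; exists N; intros m n Hm Hn.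
    specialize (HN m n Hm Hn); pose proof (bs_norm_ge0 E (bs_add (fst (u m)) (bs_opp (fst (u n))))); lra. }
  exists (l1, l2); intros eps He.
  destruct (Hl1 (eps / 2)) as [N1 H1]; [lra|].
  destruct (Hl2 (eps / 2)) as [N2 H2]; [lra|].
  exists (Nat.max N1 N2); intros n Hn; simpl.
  specialize (H1 n ltac:(lia)); specialize (H2 n ltac:(lia)); lra.
Qed.

Definition prod_BanachSpace : BanachSpace.
Proof.
  refine {| bs_car := E * F; bs_add := prod_add; bs_zero := (bs_zero, bs_zero);
            bs_opp := prod_opp; bs_scal := prod_scal; bs_norm := prod_norm |}.
  1-8: intros; apply injective_projections; simpl;
       first [apply bs_addA | apply bs_addC | apply bs_add0 | apply bs_addN
             | apply bs_scal1 | apply bs_scalA | apply bs_scalDr | apply bs_scalDl].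
  - intros x; unfold prod_norm; pose proof (bs_norm_ge0 E (fst x));
      pose proof (bs_norm_ge0 F (snd x)); lra.
  - intros x Hx; unfold prod_norm in Hx; pose proof (bs_norm_ge0 E (fst x));
      pose proof (bs_norm_ge0 F (snd x)).
    apply injective_projections; simpl; apply bs_norm_eq0; lra.
  - intros; unfold prod_norm; simpl; rewrite !bs_normZ; ring.
  - intros x y; unfold prod_norm; simpl.
    pose proof (bs_normD E (fst x) (fst y)); pose proof (bs_normD F (snd x) (snd y)); lra.
  - exact prod_complete.
Defined.

End Product.

Section ProductAlgebra.
Variables A B : BanachAlgebra.

Definition prod_mul (x y : prod_BanachSpace A B) : prod_BanachSpace A B :=
  (ba_mul (fst x) (fst y), ba_mul (snd x) (snd y)).

Lemma prod_normM (x y : prod_BanachSpace A B) :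
  bs_norm (prod_mul x y) <= bs_norm x * bs_norm y.
Proof.
  destruct x as [a b], y as [c d]; simpl; unfold prod_norm; simpl.
  pose proof (ba_normM A a c); pose proof (ba_normM B b d).
  pose proof (bs_norm_ge0 A a); pose proof (bs_norm_ge0 A c);
  pose proof (bs_norm_ge0 B b); pose proof (bs_norm_ge0 B d); nra.
Qed.

Definition prod_BanachAlgebra : BanachAlgebra.
Proof.
  refine {| ba_sp := prod_BanachSpace A B; ba_mul := prod_mul |}.
  1-5: intros; apply injective_projections; simpl;
       first [apply ba_mulA | apply ba_mulDl | apply ba_mulDr | apply ba_mulZl | apply ba_mulZr].
  exact prod_normM.
Defined.

Lemma apow_prod (a : A) (b : B) (n : nat) :
  @apow prod_BanachAlgebra (a, b) n = (apow a n, apow b n).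
Proof. induction n as [|[|k] IH]; [reflexivity | reflexivity | simpl in *; now rewrite IH]. Qed.

End ProductAlgebra.

Lemma apow_idempotent (A : BanachAlgebra) (e : A) :
  ba_mul e e = e -> forall n, apow e n = e.
Proof. intros He n; induction n as [|[|k] IH]; [reflexivity | reflexivity | simpl in *; now rewrite IH]. Qed.

Lemma idempotent_not_nil (A : BanachAlgebra) (e : A) :
  ba_mul e e = e -> e <> bs_zero -> ~ is_nil A.
Proof. intros He Hne [n [_ Hn]]; apply Hne; rewrite <- (Hn e); symmetry; now apply apow_idempotent. Qed.

Section ZeroBimodule.
Variables (A : BanachAlgebra) (E : BanachSpace).

Definition zero_bimodule : BanachBimodule A.
Proof.
  refine {| bm_sp := E; bm_lact := fun _ _ => bs_zero; bm_ract := fun _ _ => bs_zero |}.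
  all: try reflexivity.
  all: try (intros; symmetry; first [apply bs_add0 | apply bs_scal0]).
  all: exists 0; intros; rewrite bs_norm0; lra.
Defined.

Lemma is_JMul_zero_bimodule (n : nat) (J : A -> zero_bimodule) :
  is_JMul n J <-> bounded_linear J /\ forall a, J (apow a n) = bs_zero.
Proof.
  split; intros [HJ Hn]; split; try exact HJ; intros a; [apply (Hn a) | split; [apply Hn | reflexivity]].
Qed.

End ZeroBimodule.

Definition C_BanachAlgebra : BanachAlgebra.
Proof.
  refine {| ba_sp := C_BanachSpace; ba_mul := Cmul |}.
  1-5: intros; apply C_ext; simpl; ring.
  intros; simpl; rewrite Cmod_mul; lra.
Defined.

(* N has basis u = (1, 0), u^2 = (0, 1), and multiplication (p, q) (r, s) = (0, p r). *)
Definition N_mul (x y : prod_BanachSpace C_BanachSpace C_BanachSpace) :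
    prod_BanachSpace C_BanachSpace C_BanachSpace :=
  (C0, Cmul (fst x) (fst y)).

Lemma N_normM x y : bs_norm (N_mul x y) <= bs_norm x * bs_norm y.
Proof.
  destruct x as [p q], y as [r s]; simpl; unfold prod_norm; simpl.
  rewrite Cmod_C0, Cmod_mul.
  pose proof (Cmod_ge0 p); pose proof (Cmod_ge0 q);
  pose proof (Cmod_ge0 r); pose proof (Cmod_ge0 s); nra.
Qed.

Definition N_BanachAlgebra : BanachAlgebra.
Proof.
  refine {| ba_sp := prod_BanachSpace C_BanachSpace C_BanachSpace; ba_mul := N_mul |}.
  1-5: intros [? ?] [? ?]; try intros [? ?]; apply injective_projections; apply C_ext; simpl; ring.
  exact N_normM.
Defined.

Lemma N_cube (n : N_BanachAlgebra) : apow n 3 = bs_zero.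
Proof. apply injective_projections; apply C_ext; simpl; ring. Qed.

Definition CN : BanachAlgebra := prod_BanachAlgebra C_BanachAlgebra N_BanachAlgebra.

Definition CN_unit : CN := (Defs.C1, bs_zero).

Lemma CN_unit_idempotent : ba_mul CN_unit CN_unit = CN_unit.
Proof. apply injective_projections; [|apply injective_projections]; apply C_ext; simpl; ring. Qed.

Lemma CN_unit_neq0 : CN_unit <> bs_zero.
Proof. intros H; apply (f_equal (fun a : CN => Re (fst a))) in H; simpl in H; lra. Qed.

Definition CN_u : CN := (C0, (Defs.C1, C0)).

Lemma CN_cube (x : Defs.C) (n : N_BanachAlgebra) :
  @apow CN (x, n) 3 = bs_scal (apow (A := C_BanachAlgebra) x 3) (apow CN_unit 2).
Proof.
  unfold CN; rewrite apow_prod, N_cube, (apow_idempotent _ _ CN_unit_idempotent).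
  apply injective_projections; simpl.
  - apply C_ext; simpl; ring.
  - symmetry; apply (bs_scal0 (prod_BanachSpace C_BanachSpace C_BanachSpace)).
Qed.

Definition CN_top (a : CN) : zero_bimodule CN C_BanachSpace := snd (snd a).

Lemma CN_top_bounded_linear : bounded_linear CN_top.
Proof.
  split; [reflexivity | split; [reflexivity|]].
  exists 1; intros [x [p q]]; cbn; unfold prod_norm; cbn; unfold prod_norm; cbn.
  pose proof (Cmod_ge0 x); pose proof (Cmod_ge0 p); lra.
Qed.

Lemma CN_top_cube (a : CN) : CN_top (apow a 3) = C0.
Proof. destruct a as [x n]; unfold CN; rewrite apow_prod, N_cube; reflexivity. Qed.

Theorem mainTheorem16 :
  exists (A : BanachAlgebra) (X : BanachBimodule A),
    ~ is_nil A /\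
    (forall J : A -> X, is_JMul 2 J -> is_JMul 3 J) /\
    (exists J : A -> X, is_JMul 3 J /\ ~ is_JMul 2 J).
Proof.
  exists CN, (zero_bimodule CN C_BanachSpace); split; [|split].
  - exact (idempotent_not_nil _ _ CN_unit_idempotent CN_unit_neq0).
  - intros J; rewrite !is_JMul_zero_bimodule; intros [HJ Hsqr]; split; [exact HJ|].
    intros [x n]; destruct HJ as [_ [HJscal _]].
    rewrite CN_cube, HJscal, Hsqr; apply bs_scal0.
  - exists CN_top; rewrite !is_JMul_zero_bimodule; split.
    + exact (conj CN_top_bounded_linear CN_top_cube).
    + intros [_ Hsqr]; specialize (Hsqr CN_u).
      apply (f_equal Re) in Hsqr; simpl in Hsqr; lra.
Qed.
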